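(* There exists a subclass $\mathbf{X}$ of the class $\mathbf{M}$ of all metric spaces such that $\mathbf{P}_{\mathbf{X}}=\mathbf{SI}$.
   Context: All metric spaces are assumed to have nonempty underlying sets. $\mathbf{F}$ is the set of all functions $f:[0,\infty)\to[0,\infty)$. $f\in\mathbf{F}$ is amenable if $f^{-1}(0)=\{0\}$; increasing if $x\le y$ implies $f(x)\le f(y)$; subadditive if $f(x+y)\le f(x)+f(y)$ for all $x,y\ge0$. $\mathbf{SI}$ is the set of all amenable, increasing, subadditive $f\in\mathbf{F}$. For a class $\mathbf{X}$ of metric spaces, $\mathbf{P}_{\mathbf{X}}$ denotes the set of all $f\in\mathbf{F}$ such that for every metric space $(X,d)$, if $(X,d)\in\mathbf{X}$ then $(X,f\circ d)\in\mathbf{X}$ (where $f\circ d(x,y)=f(d(x,y))$; membership requires $f\circ d$ to be a metric). *)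

From Stdlib Require Import Reals.
Open Scope R_scope.

Definition is_metric_space (T : Type) (d : T -> T -> R) : Prop :=
  inhabited T /\
  (forall x y, 0 <= d x y) /\
  (forall x y, d x y = 0 <-> x = y) /\
  (forall x y, d x y = d y x) /\
  (forall x y z, d x z <= d x y + d y z).

Definition metric_class (X : forall T : Type, (T -> T -> R) -> Prop) : Prop :=
  forall (T : Type) (d : T -> T -> R), X T d -> is_metric_space T d.

(* f belongs to F: f maps [0,oo) into [0,oo) (values off [0,oo) are irrelevant). *)
Definition in_F (f : R -> R) : Prop := forall x, 0 <= x -> 0 <= f x.

Definition amenable (f : R -> R) : Prop :=
  forall x, 0 <= x -> (f x = 0 <-> x = 0).

Definition increasing (f : R -> R) : Prop :=
  forall x y, 0 <= x -> x <= y -> f x <= f y.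

Definition subadditive (f : R -> R) : Prop :=
  forall x y, 0 <= x -> 0 <= y -> f (x + y) <= f x + f y.

Definition SI (f : R -> R) : Prop :=
  in_F f /\ amenable f /\ increasing f /\ subadditive f.

Definition P_ (X : forall T : Type, (T -> T -> R) -> Prop) (f : R -> R) : Prop :=
  in_F f /\
  forall (T : Type) (d : T -> T -> R),
    is_metric_space T d -> X T d -> X T (fun x y => f (d x y)).

(* Take X to be all metric spaces, except that a metric on the real line
   must be nondecreasing in each argument along the order of R.  An SI
   function preserves metrics and monotonicity, so it lies in P_X.
   Conversely, the usual metric [Rdist] on R belongs to X; if f o Rdist is
   again in X then, since Rdist 0 a = a for a >= 0, f inherits amenability
   from the identity of indiscernibles, monotonicity from the line
   condition, and subadditivity from the triangle inequality at 0, x, x + y. *)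

From Pilot Require Import Defs.
From Stdlib Require Import Reals Lra ProofIrrelevance.
Open Scope R_scope.

Definition line_monotone (d : R -> R -> R) : Prop :=
  forall x y z, x <= y -> y <= z -> d x y <= d x z.

(* A class is a predicate on arbitrary types, so "the carrier is R" has to be
   expressed through an equality of types, along which points are transported. *)
Definition castR {T : Type} (e : @eq Type R T) (x : R) : T :=
  @eq_rect Type R (fun A : Type => A) x T e.

Lemma castR_id (e : @eq Type R R) (x : R) : castR e x = x.
Proof. now rewrite (proof_irrelevance _ e eq_refl). Qed.

Definition line_monotone_metric_space (T : Type) (d : T -> T -> R) : Prop :=
  is_metric_space T d /\
  forall e : @eq Type R T, line_monotone (fun x y => d (castR e x) (castR e y)).

Lemma line_monotone_metric_space_R (d : R -> R -> R) :
  line_monotone_metric_space R d <-> is_metric_space R d /\ line_monotone d.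
Proof.
  unfold line_monotone_metric_space, line_monotone.
  split; intros [Hd Hmono]; split; try exact Hd.
  - exact (Hmono eq_refl).
  - intros e x y z. rewrite !castR_id. apply Hmono.
Qed.

Lemma SI_comp_metric (f : R -> R) (T : Type) (d : T -> T -> R) :
  SI f -> is_metric_space T d -> is_metric_space T (fun x y => f (d x y)).
Proof.
  intros [Hf [Ha [Hi Hs]]] [Hinh [Hpos [Hsep [Hsym Htri]]]].
  split; [exact Hinh|]. split; [|split; [|split]].
  - intros x y. apply Hf, Hpos.
  - intros x y. rewrite <- (Hsep x y). apply Ha, Hpos.
  - intros x y. now rewrite Hsym.
  - intros x y z. apply Rle_trans with (f (d x y + d y z)).
    + apply Hi; [apply Hpos | apply Htri].
    + apply Hs; apply Hpos.
Qed.

(* [Defs.] is needed: Stdlib's Reals also defines an [increasing]. *)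
Lemma increasing_comp_line_monotone (f : R -> R) (d : R -> R -> R) :
  Defs.increasing f -> (forall x y, 0 <= d x y) -> line_monotone d ->
  line_monotone (fun x y => f (d x y)).
Proof. intros Hi Hpos Hmono x y z Hxy Hyz. apply Hi; auto. Qed.

Lemma SI_comp_line_monotone_metric_space (f : R -> R) (T : Type) (d : T -> T -> R) :
  SI f -> line_monotone_metric_space T d ->
  line_monotone_metric_space T (fun x y => f (d x y)).
Proof.
  intros HSI [Hd Hmono]. split.
  - exact (SI_comp_metric f T d HSI Hd).
  - intros e. apply increasing_comp_line_monotone; [apply HSI | | apply Hmono].
    intros x y. apply Hd.
Qed.

Lemma Rdist_metric_space : is_metric_space R Rdist.
Proof.
  split; [exact (inhabits 0)|]. split; [|split; [|split]].
  - intros x y. apply Rge_le, Rdist_pos.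
  - apply Rdist_refl.
  - apply Rdist_sym.
  - intros x y z. apply Rdist_tri.
Qed.

Lemma Rdist_line_monotone : line_monotone Rdist.
Proof.
  intros x y z Hxy Hyz. unfold Rdist.
  rewrite !Rabs_left1 by lra. lra.
Qed.

Lemma Rdist_0_l (a : R) : 0 <= a -> Rdist 0 a = a.
Proof. intros Ha. unfold Rdist. rewrite Rabs_left1 by lra. ring. Qed.

Lemma SI_of_comp_Rdist (f : R -> R) :
  in_F f ->
  is_metric_space R (fun x y => f (Rdist x y)) ->
  line_monotone (fun x y => f (Rdist x y)) ->
  SI f.
Proof.
  intros Hf [_ [_ [Hsep [_ Htri]]]] Hmono.
  split; [exact Hf|]. split; [|split].
  - intros x Hx. specialize (Hsep 0 x). cbv beta in Hsep.
    rewrite Rdist_0_l in Hsep by exact Hx. split; intros H.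
    + symmetry. now apply Hsep.
    + now apply Hsep.
  - intros x y Hx Hxy. specialize (Hmono 0 x y Hx Hxy). cbv beta in Hmono.
    now rewrite !Rdist_0_l in Hmono by lra.
  - intros x y Hx Hy. specialize (Htri 0 x (x + y)). cbv beta in Htri.
    replace (Rdist x (x + y)) with (Rdist 0 y) in Htri
      by (unfold Rdist; f_equal; ring).
    now rewrite !Rdist_0_l in Htri by lra.
Qed.

Theorem mainTheorem9 :
  exists X : forall T : Type, (T -> T -> R) -> Prop,
    metric_class X /\ (forall f : R -> R, in_F f -> (P_ X f <-> SI f)).
Proof.
  exists line_monotone_metric_space. split.
  - intros T d [Hd _]. exact Hd.
  - intros f Hf. split.
    + intros [_ HP].
      assert (Hline : line_monotone_metric_space R Rdist).
      { apply line_monotone_metric_space_R.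
        split; [exact Rdist_metric_space | exact Rdist_line_monotone]. }
      specialize (HP R Rdist Rdist_metric_space Hline).
      apply line_monotone_metric_space_R in HP as [Hfd Hmono].
      exact (SI_of_comp_Rdist f Hf Hfd Hmono).
    + intros HSI. split; [exact Hf|].
      intros T d _. exact (SI_comp_line_monotone_metric_space f T d HSI).
Qed.
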